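(* Consider a firm with managers $i=1,\dots,n$, each with skill $s_i\in(0,1]$, and parameters $A>0$, $\alpha\in(0,1)$, $c_0>0$, $\gamma>0$, $\beta\ge 0$. Fix a worker allocation: manager $i$ supervises a team of $n_i\ge 0$ workers, the workers $j$ having skills $q_j>0$, and let $Q_i=\sum_{j\in\text{team}_i} q_j$; assume at least one team is nonempty. For agent capital $K_A\ge 0$ define $$c_i(K_A)=\frac{c_0}{1+\gamma K_A s_i^{\beta}},\qquad L_{\text{eff},i}(K_A)=\frac{Q_i}{1+c_i(K_A)\,n_i},\qquad Y_i(K_A)=A\,L_{\text{eff},i}(K_A)^{\alpha},\qquad Y(K_A)=\sum_{i=1}^n Y_i(K_A).$$ Then, holding the team allocations $\{n_i,\text{team}_i\}$ fixed, $\partial Y/\partial K_A>0$ for all $K_A\ge 0$, i.e. output is strictly increasing in $K_A$.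
   Context: $K_A$ (''agent capital'') is a nonnegative real number representing AI capability that reduces coordination costs; $c_i(K_A)$ is manager $i$'s per-worker coordination cost, $L_{\text{eff},i}$ is the effective labor of team $i$, and $Y_i$ is team $i$'s output (each team has exactly one manager). *)

From mathcomp Require Import all_boot all_order all_algebra.
From mathcomp Require Import all_classical all_reals all_analysis.
Set Implicit Arguments. Unset Strict Implicit. Unset Printing Implicit Defensive.
Import Order.TTheory GRing.Theory Num.Theory.
Local Open Scope ring_scope.

Section Model.
Variable R : realType.

Definition coord_cost (c0 gamma beta si KA : R) : R :=
  c0 / (1 + gamma * KA * si `^ beta).

(* team_i is the list of skills q_j of the workers supervised by manager i;
   n_i = size team_i, Q_i = sum of the skills. *)
Definition team_size (team : seq R) : R := (size team)%:R.
Definition team_skill (team : seq R) : R := \sum_(q <- team) q.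

Definition eff_labor (c0 gamma beta si : R) (team : seq R) (KA : R) : R :=
  team_skill team / (1 + coord_cost c0 gamma beta si KA * team_size team).

Definition team_output (A alpha c0 gamma beta si : R) (team : seq R) (KA : R) : R :=
  A * eff_labor c0 gamma beta si team KA `^ alpha.

Definition firm_output (n : nat) (A alpha c0 gamma beta : R) (s : 'I_n -> R)
    (team : 'I_n -> seq R) (KA : R) : R :=
  \sum_(i < n) team_output A alpha c0 gamma beta (s i) (team i) KA.

End Model.

(* Agent capital only enters through the coordination costs c_i, which fall strictly
   as K_A grows (their derivative is -c0 gamma s_i^beta / (1 + gamma K_A s_i^beta)^2).
   A lower c_i raises L_eff,i whenever team i is nonempty (Q_i, n_i > 0), and
   x |-> A x^alpha is strictly increasing, so every nonempty team's output has a
   positive derivative; empty teams produce the constant 0.  Summing gives Y' > 0. *)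
From mathcomp Require Import all_boot all_order all_algebra.
From mathcomp Require Import all_classical all_reals all_analysis.
From mathcomp Require Import ring.
Import Order.TTheory GRing.Theory Num.Theory.
Local Open Scope ring_scope.

Section Derivatives.
Set Implicit Arguments. Unset Strict Implicit.
Variable R : realType.
Implicit Types (f : R -> R) (x d k m a : R).

Lemma is_derive_div_1DMr f k m x d : 1 + f x * m != 0 -> is_derive x 1 f d ->
  is_derive x 1 (fun y => k / (1 + f y * m)) (- (k * m * d) / (1 + f x * m) ^+ 2).
Proof.
move=> fx_neq0 df.
have dD : is_derive x 1 (fun y => 1 + f y * m) (d * m).
  have := is_deriveD (is_derive_cst (1 : R) x 1) (is_deriveM df (is_derive_cst m x 1)).
  by rewrite add0r scaler0 add0r /GRing.scale /= [m * d]mulrC.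
suff -> : - (k * m * d) / (1 + f x * m) ^+ 2 = k * (- (1 + f x * m) ^- 2 * (d * m)).
  by have := is_deriveZ k (is_deriveV (f := fun y => 1 + f y * m) fx_neq0 dD).
by ring.
Qed.

Lemma is_derive_powR_comp f a x d : 0 < f x -> is_derive x 1 f d ->
  is_derive x 1 (fun y => f y `^ a) (a * f x `^ (a - 1) * d).
Proof. by move=> fx_gt0 df; exact: is_derive1_comp (is_derive1_powR a fx_gt0) df. Qed.

Lemma derive1_sum_gt0 n (f : 'I_n -> R -> R) x (i0 : 'I_n) :
  (forall i, exists2 d, is_derive x 1 (f i) d & 0 <= d) ->
  (exists2 d, is_derive x 1 (f i0) d & 0 < d) ->
  derivable (fun y => \sum_(i < n) f i y) x 1 /\
  0 < derive1 (fun y => \sum_(i < n) f i y) x.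
Proof.
move=> df_ge0 [d0 df0 d0_gt0].
have D_f i : is_derive x 1 (f i) ('D_1 (f i) x).
  by have [d df _] := df_ge0 i; rewrite (derive_val (is_derive := df)).
have -> : (fun y => \sum_(i < n) f i y) = \sum_(i < n) f i by rewrite fct_sumE.
have dsum := is_derive_sum D_f.
split; first by case: dsum.
rewrite derive1E derive_val (bigD1 i0) //= (derive_val (is_derive := df0)).
apply: ltr_wpDr d0_gt0; apply: sumr_ge0 => i _.
by have [d df d_ge0] := df_ge0 i; rewrite (derive_val (is_derive := df)).
Qed.

End Derivatives.

Section TeamOutput.
Set Implicit Arguments. Unset Strict Implicit.
Variables (R : realType) (A alpha c0 gamma beta si : R).
Hypotheses (A_gt0 : 0 < A) (alpha_gt0 : 0 < alpha) (c0_gt0 : 0 < c0)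
  (gamma_gt0 : 0 < gamma) (si_gt0 : 0 < si).
Implicit Types (x : R) (t : seq R).

Lemma coord_cost_gt0 x : 0 <= x -> 0 < coord_cost c0 gamma beta si x.
Proof.
by move=> x_ge0; rewrite divr_gt0 // ltr_wpDr // !mulr_ge0 ?powR_ge0 // ltW.
Qed.

Lemma coord_cost_decreasing x : 0 <= x ->
  exists2 d, is_derive x 1 (coord_cost c0 gamma beta si) d & d < 0.
Proof.
move=> x_ge0; have p_gt0 : 0 < si `^ beta by rewrite powR_gt0.
have D_gt0 : 0 < 1 + gamma * x * si `^ beta.
  by rewrite ltr_wpDr // !mulr_ge0 // ltW.
have dgamma : is_derive x 1 (fun y => gamma * y) gamma.
  by have := is_deriveZ gamma (is_derive_id x 1); rewrite /GRing.scale /= mulr1.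
have dcost := is_derive_div_1DMr (f := fun y => gamma * y) c0 (lt0r_neq0 D_gt0) dgamma.
eexists; first exact: dcost.
by rewrite mulNr oppr_lt0 divr_gt0 ?exprn_gt0 // !mulr_gt0.
Qed.

Lemma team_skill_gt0 t : all (fun q => 0 < q) t -> t != [::] ->
  0 < team_skill t.
Proof.
case: t => // q t /= /andP[q_gt0 t_gt0] _; rewrite /team_skill big_cons.
by rewrite ltr_pwDl // big_seq sumr_ge0 // => r /(allP t_gt0)/ltW.
Qed.

Lemma eff_labor_denom_gt0 t x : 0 <= x ->
  0 < 1 + coord_cost c0 gamma beta si x * team_size t.
Proof. by move=> x_ge0; rewrite ltr_wpDr // mulr_ge0 ?ler0n // ltW ?coord_cost_gt0. Qed.

Lemma eff_labor_increasing t x : all (fun q => 0 < q) t -> t != [::] ->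
  0 <= x -> exists2 d, is_derive x 1 (eff_labor c0 gamma beta si t) d & 0 < d.
Proof.
move=> t_gt0 t_neq0 x_ge0.
have Q_gt0 := team_skill_gt0 t_gt0 t_neq0.
have n_gt0 : 0 < team_size t by rewrite ltr0n lt0n size_eq0.
have D_gt0 := eff_labor_denom_gt0 t x_ge0.
have [dc dcost dc_lt0] := coord_cost_decreasing x_ge0.
eexists; first exact: (is_derive_div_1DMr (team_skill t) (lt0r_neq0 D_gt0) dcost).
by rewrite divr_gt0 ?exprn_gt0 // -mulrN mulr_gt0 ?mulr_gt0 ?oppr_gt0.
Qed.

Lemma team_output_increasing t x : all (fun q => 0 < q) t -> t != [::] ->
  0 <= x -> exists2 d, is_derive x 1 (team_output A alpha c0 gamma beta si t) d & 0 < d.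
Proof.
move=> t_gt0 t_neq0 x_ge0.
have L_gt0 : 0 < eff_labor c0 gamma beta si t x.
  by rewrite divr_gt0 ?team_skill_gt0 ?eff_labor_denom_gt0.
have [dL dlabor dL_gt0] := eff_labor_increasing t_gt0 t_neq0 x_ge0.
eexists; first exact: (is_deriveZ A (is_derive_powR_comp alpha L_gt0 dlabor)).
by rewrite /GRing.scale /= !mulr_gt0 // powR_gt0.
Qed.

Lemma team_output_nil : team_output A alpha c0 gamma beta si [::] = cst 0.
Proof.
apply: funext => x; rewrite /team_output /eff_labor /team_skill big_nil mul0r.
by rewrite powR0 ?mulr0 // gt_eqF.
Qed.

Lemma team_output_nondecreasing t x : all (fun q => 0 < q) t -> 0 <= x ->
  exists2 d, is_derive x 1 (team_output A alpha c0 gamma beta si t) d & 0 <= d.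
Proof.
move=> t_gt0 x_ge0; have [->|t_neq0] := eqVneq t [::].
  by exists 0; rewrite // team_output_nil; exact: is_derive_cst.
by have [d dout d_gt0] := team_output_increasing t_gt0 t_neq0 x_ge0; exists d; rewrite ?ltW.
Qed.

End TeamOutput.

Theorem proposition1 (R : realType) (n : nat) (s : 'I_n -> R)
    (A alpha c0 gamma beta : R) (team : 'I_n -> seq R) :
  (forall i, 0 < s i <= 1) ->
  0 < A -> 0 < alpha < 1 -> 0 < c0 -> 0 < gamma -> 0 <= beta ->
  (forall i, all (fun q => 0 < q) (team i)) ->
  (exists i, team i != [::]) ->
  forall KA : R, 0 <= KA ->
    derivable (firm_output A alpha c0 gamma beta s team) KA 1 /\
    0 < derive1 (firm_output A alpha c0 gamma beta s team) KA.
Proof.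
move=> s_in01 A_gt0 /andP[alpha_gt0 _] c0_gt0 gamma_gt0 _ team_gt0 [i0 team_i0] KA KA_ge0.
apply: (derive1_sum_gt0 (i0 := i0)) => [i|].
  by have /andP[si_gt0 _] := s_in01 i; exact: team_output_nondecreasing.
by have /andP[si0_gt0 _] := s_in01 i0; exact: team_output_increasing.
Qed.
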